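(* Let $E$ be a Euclidean space and let $T:E\to E$ be $\alpha$-averaged for some $\alpha\in\,]0,1[$. Then $\operatorname{Fix}T=\emptyset$ if and only if $\|T^k(x)\|\to\infty$ as $k\to\infty$ for every $x\in E$.
   Context: $E$ is a finite-dimensional real inner product space with norm $\|\cdot\|$. $T:E\to E$ is $\alpha$-averaged ($\alpha\in]0,1[$) if $T=(1-\alpha)\operatorname{Id}+\alpha R$ for some $R:E\to E$ with $\|R(x)-R(y)\|\le\|x-y\|$ for all $x,y$. $\operatorname{Fix}T=\{x\in E:T(x)=x\}$ and $T^k$ is the $k$-fold composition. *)

From Stdlib Require Import Reals.
From mathcomp Require Import all_boot.
Set Implicit Arguments. Unset Strict Implicit. Unset Printing Implicit Defensive.

(* The Euclidean space E of dimension n, modelled as R^n = functions 'I_n -> R. *)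
Definition vec (n : nat) : Type := 'I_n -> R.

Definition vadd n (x y : vec n) : vec n := fun i => Rplus (x i) (y i).
Definition vscale n (a : R) (x : vec n) : vec n := fun i => Rmult a (x i).
Definition vsub n (x y : vec n) : vec n := fun i => Rminus (x i) (y i).

Definition inner n (x y : vec n) : R := \big[Rplus/R0]_(i < n) Rmult (x i) (y i).
Definition vnorm n (x : vec n) : R := sqrt (inner x x).

Definition nonexpansive n (Rm : vec n -> vec n) : Prop :=
  forall x y, Rle (vnorm (vsub (Rm x) (Rm y))) (vnorm (vsub x y)).

Definition averaged n (alpha : R) (T : vec n -> vec n) : Prop :=
  exists Rm : vec n -> vec n, nonexpansive Rm /\
    forall x, T x = vadd (vscale (Rminus 1 alpha) x) (vscale alpha (Rm x)).

Definition iterate n (T : vec n -> vec n) (k : nat) (x : vec n) : vec n := Nat.iter k T x.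

(* If T p = p the orbit of p is constant, so not every orbit diverges.  The real
   content is the converse: if some orbit does not diverge, T has a fixed point.
   Such an orbit returns infinitely often to a bounded set, so by
   Bolzano-Weierstrass it has a cluster point z.  For a nonexpansive map a cluster
   point of an orbit is recurrent (a cluster point of its own orbit), and along a
   recurrent orbit the step lengths |T^m z - T^(m+1) z| are all equal.  For an
   averaged map, equality in the nonexpansiveness estimate forces T x - T y = x - y,
   so the orbit of z is the arithmetic progression z - m (z - T z); recurrence then
   forces z - T z = 0. *)

From Stdlib Require Import Reals Lra Classical ClassicalEpsilon FunctionalExtensionality.
From mathcomp Require Import all_boot.

Set Implicit Arguments. Unset Strict Implicit.
Open Scope R_scope.

Notation sqnorm x := (inner x x).
Notation dist x y := (vnorm (vsub x y)).

Lemma sum_ge0 n (F : 'I_n -> R) :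
  (forall i, 0 <= F i) -> 0 <= \big[Rplus/R0]_(i < n) F i.
Proof.
elim: n F => [|n IH] F F_ge0; first by rewrite big_ord0; lra.
rewrite big_ord_recl; have := F_ge0 ord0.
have := IH (fun i => F (lift ord0 i)) (fun i => F_ge0 _); lra.
Qed.

Lemma sum_ge_term n (F : 'I_n -> R) j :
  (forall i, 0 <= F i) -> F j <= \big[Rplus/R0]_(i < n) F i.
Proof.
elim: n F j => [|n IH] F j F_ge0; first by case: j.
rewrite big_ord_recl; have := F_ge0 ord0.
have := sum_ge0 (F := fun i : 'I_n => F (lift ord0 i)) (fun i => F_ge0 _).
case: (unliftP ord0 j) => [k ->|->]; last by lra.
have := IH (fun i => F (lift ord0 i)) k (fun i => F_ge0 _); lra.
Qed.

Lemma sum_le_const n (F : 'I_n -> R) c :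
  (forall i, F i <= c) -> \big[Rplus/R0]_(i < n) F i <= INR n * c.
Proof.
elim: n F => [|n IH] F F_le; first by rewrite big_ord0 /=; lra.
rewrite big_ord_recl S_INR; have := F_le ord0.
have := IH (fun i => F (lift ord0 i)) (fun i => F_le _); lra.
Qed.

Lemma sqnorm_comb n (a b : vec n) c1 c2 :
  sqnorm (fun i => c1 * a i + c2 * b i) =
  c1 * c1 * sqnorm a + 2 * c1 * c2 * inner a b + c2 * c2 * sqnorm b.
Proof.
rewrite /inner; elim: n a b => [|n IH] a b; first by rewrite !big_ord0; ring.
by rewrite !big_ord_recl IH; ring.
Qed.

Lemma sqnorm_ge0 n (x : vec n) : 0 <= sqnorm x.
Proof. by apply: sum_ge0 => i; apply: Rle_0_sqr. Qed.

Lemma sqnorm_eq0 n (x : vec n) : sqnorm x = 0 -> x = (fun _ => 0).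
Proof.
move=> x0; apply: functional_extensionality => j.
have := sum_ge_term (F := fun i => x i * x i) j (fun i => Rle_0_sqr (x i)).
rewrite /inner in x0; rewrite x0; nra.
Qed.

(* Cauchy-Schwarz, from the nonnegativity of |s x + t y|^2 for suitable s, t. *)
Lemma cauchy_schwarz n (x y : vec n) :
  inner x y * inner x y <= sqnorm x * sqnorm y.
Proof.
have quad s t : 0 <= s * s * sqnorm x + 2 * s * t * inner x y + t * t * sqnorm y.
  by rewrite -sqnorm_comb; apply: sqnorm_ge0.
have := sqnorm_ge0 x; have := sqnorm_ge0 y.
case: (Rle_lt_or_eq_dec 0 (sqnorm y) (sqnorm_ge0 y)) => [y_pos | y0].
  by have := quad (sqnorm y) (- inner x y); nra.
have := quad (- inner x y) (sqnorm x + 1); rewrite -y0.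
have := Rle_0_sqr (inner x y); rewrite /Rsqr; nra.
Qed.

Lemma vnorm_ge0 n (x : vec n) : 0 <= vnorm x.
Proof. exact: sqrt_pos. Qed.

Lemma vnorm_sq n (x : vec n) : vnorm x * vnorm x = sqnorm x.
Proof. exact/sqrt_sqrt/sqnorm_ge0. Qed.

Lemma vnorm_le0 n (x : vec n) : vnorm x <= 0 -> x = (fun _ => 0).
Proof.
move=> x_le0; apply: sqnorm_eq0; rewrite -vnorm_sq.
have := vnorm_ge0 x; nra.
Qed.

Lemma vnorm_triangle n (x y : vec n) : vnorm (vadd x y) <= vnorm x + vnorm y.
Proof.
have sq_add : sqnorm (vadd x y) = sqnorm x + 2 * inner x y + sqnorm y.
  have -> : vadd x y = (fun i => 1 * x i + 1 * y i).
    by apply: functional_extensionality => i; rewrite /vadd; ring.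
  by rewrite sqnorm_comb; ring.
have := cauchy_schwarz x y; rewrite -!vnorm_sq => cs.
have := vnorm_ge0 x; have := vnorm_ge0 y => y_ge0 x_ge0.
have inner_le : inner x y <= vnorm x * vnorm y.
  have : 0 <= vnorm x * vnorm y by apply: Rmult_le_pos.
  replace (vnorm x * vnorm x * (vnorm y * vnorm y))
    with ((vnorm x * vnorm y) * (vnorm x * vnorm y)) in cs by ring.
  by move: cs; generalize (vnorm x * vnorm y) (inner x y) => p c; nra.
rewrite -(sqrt_square (vnorm x + vnorm y)); last lra.
by rewrite {1}/vnorm; apply: sqrt_le_1_alt; rewrite sq_add -!vnorm_sq; nra.
Qed.

Lemma dist_triangle n (x y z : vec n) : dist x z <= dist x y + dist y z.
Proof.
have -> : vsub x z = vadd (vsub x y) (vsub y z).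
  by apply: functional_extensionality => i; rewrite /vsub /vadd; ring.
exact: vnorm_triangle.
Qed.

Lemma dist_sym n (x y : vec n) : dist x y = dist y x.
Proof. by rewrite /vnorm /inner /vsub; f_equal; apply: eq_bigr => i _; ring. Qed.

Lemma vnorm_scale n (c : R) (x : vec n) : 0 <= c -> vnorm (vscale c x) = c * vnorm x.
Proof.
move=> c_ge0; have -> : vscale c x = (fun i => c * x i + 0 * x i).
  by apply: functional_extensionality => i; rewrite /vscale; ring.
rewrite /vnorm sqnorm_comb.
have -> : c * c * sqnorm x + 2 * c * 0 * inner x x + 0 * 0 * sqnorm x = (c * c) * sqnorm x
  by ring.
by rewrite sqrt_mult_alt ?sqrt_square //; nra.
Qed.

Lemma coord_le_vnorm n (x : vec n) i : Rabs (x i) <= vnorm x.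
Proof.
rewrite -sqrt_Rsqr_abs /vnorm; apply: sqrt_le_1_alt.
exact: (sum_ge_term (F := fun i => x i * x i) i (fun j => Rle_0_sqr (x j))).
Qed.

Lemma vnorm_le_coord n (x : vec n) r :
  0 <= r -> (forall i, Rabs (x i) <= r) -> vnorm x <= sqrt (INR n) * r.
Proof.
move=> r_ge0 x_le; rewrite -(sqrt_square r) // -sqrt_mult_alt; last exact: pos_INR.
apply: sqrt_le_1_alt; apply: sum_le_const => i.
change (Rsqr (x i) <= r * r); rewrite Rsqr_abs /Rsqr.
by have := x_le i; have := Rabs_pos (x i); nra.
Qed.

(* The fundamental inequality of an averaged map T = (1 - alpha) Id + alpha R:
   alpha |Tx - Ty|^2 + (1 - alpha) |(x - y) - (Tx - Ty)|^2 <= alpha |x - y|^2.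
   It follows from the identity LHS = alpha (1 - alpha) |a|^2 + alpha^2 |b|^2,
   where a = x - y and b = Rx - Ry, together with |b| <= |a|. *)
Lemma averaged_ineq n alpha (T : vec n -> vec n) : averaged alpha T -> forall x y,
  alpha * sqnorm (vsub (T x) (T y)) +
  (1 - alpha) * sqnorm (vsub (vsub x y) (vsub (T x) (T y))) <=
  alpha * sqnorm (vsub x y).
Proof.
case=> Rm [Rm_ne T_def] x y.
set a := vsub x y; set b := vsub (Rm x) (Rm y).
have Tdiff : vsub (T x) (T y) = (fun i => (1 - alpha) * a i + alpha * b i).
  by apply: functional_extensionality => i; rewrite !T_def /a /b /vsub /vadd /vscale; ring.
have Tdefect : vsub a (vsub (T x) (T y)) = (fun i => alpha * a i + (- alpha) * b i).
  by apply: functional_extensionality => i; rewrite Tdiff /vsub; ring.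
have b_le_a : sqnorm b <= sqnorm a.
  have := Rm_ne x y; have := vnorm_ge0 b; rewrite -/a -/b -(vnorm_sq a) -(vnorm_sq b); nra.
rewrite Tdefect Tdiff !sqnorm_comb.
have : 0 <= alpha * alpha * (sqnorm a - sqnorm b) by apply: Rmult_le_pos; nra.
nra.
Qed.

Lemma averaged_nonexpansive n alpha (T : vec n -> vec n) :
  0 < alpha <= 1 -> averaged alpha T -> nonexpansive T.
Proof.
move=> alpha_range T_avg x y; apply: sqrt_le_1_alt.
have := averaged_ineq T_avg x y; have := sqnorm_ge0 (vsub (vsub x y) (vsub (T x) (T y))).
nra.
Qed.

Lemma averaged_rigid n alpha (T : vec n -> vec n) :
  alpha < 1 -> averaged alpha T -> forall x y,
  dist (T x) (T y) = dist x y -> vsub (T x) (T y) = vsub x y.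
Proof.
move=> alpha_lt1 T_avg x y same_dist.
have := averaged_ineq T_avg x y.
rewrite -(vnorm_sq (vsub (T x) (T y))) -(vnorm_sq (vsub x y)) same_dist => ineq.
have defect0 : sqnorm (vsub (vsub x y) (vsub (T x) (T y))) = 0.
  by have := sqnorm_ge0 (vsub (vsub x y) (vsub (T x) (T y))); nra.
apply: functional_extensionality => i.
have := f_equal (fun v => v i) (sqnorm_eq0 defect0); rewrite /vsub /=; lra.
Qed.

Lemma iterate_S n (T : vec n -> vec n) k x : iterate T k.+1 x = T (iterate T k x).
Proof. by []. Qed.

Lemma iterate_add n (T : vec n -> vec n) m k x :
  iterate T (m + k) x = iterate T m (iterate T k x).
Proof. by elim: m => [|m IH] //; rewrite addSn iterate_S IH. Qed.

Definition cluster_point n (u : nat -> vec n) (z : vec n) : Prop :=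
  forall e, 0 < e -> forall N, exists k, (N <= k)%N /\ dist (u k) z < e.

Definition recurrent n (T : vec n -> vec n) (z : vec n) : Prop :=
  cluster_point (fun k => iterate T k z) z.

Section NonexpansiveOrbits.

Variables (n : nat) (T : vec n -> vec n).
Hypothesis T_ne : nonexpansive T.

Lemma iterate_nonexpansive m x y : dist (iterate T m x) (iterate T m y) <= dist x y.
Proof.
elim: m => [|m IH]; first exact: Rle_refl.
by apply: Rle_trans IH; rewrite !iterate_S; apply: T_ne.
Qed.

Lemma step_nonincreasing x k k' : (k <= k')%N ->
  dist (iterate T k' x) (iterate T k'.+1 x) <= dist (iterate T k x) (iterate T k.+1 x).
Proof.
move=> /subnK <-; rewrite -addnS !iterate_add; exact: iterate_nonexpansive.
Qed.

(* A cluster point z of an orbit is recurrent: if T^k x and T^k' x (k' >= k + N)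
   are both near z, then T^(k'-k) z is near T^(k'-k) (T^k x) = T^k' x, hence near z. *)
Lemma cluster_point_recurrent x z :
  cluster_point (fun k => iterate T k x) z -> recurrent T z.
Proof.
move=> cl e e_pos N.
have [k [_ k_close]] := cl (e / 2) ltac:(lra) 0%N.
have [k' [k'_ge k'_close]] := cl (e / 2) ltac:(lra) (N + k)%N.
have k_le : (k <= k')%N := leq_trans (leq_addl N k) k'_ge.
exists (k' - k)%N; split; first by rewrite leq_subRL // addnC.
have back : dist (iterate T (k' - k) z) (iterate T k' x) <= dist (iterate T k x) z.
  rewrite -{2}(subnK k_le) iterate_add (dist_sym (iterate T k x)).
  exact: iterate_nonexpansive.
have := dist_triangle (iterate T (k' - k) z) (iterate T k' x) z; lra.
Qed.

Lemma recurrent_step_const z : recurrent T z -> forall m,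
  dist (iterate T m z) (iterate T m.+1 z) = dist z (T z).
Proof.
move=> rec m; apply: Rle_antisym; first exact: (step_nonincreasing z (leq0n m)).
apply: Rle_plus_epsilon => e e_pos.
have [p [p_ge p_close]] := rec (e / 2) ltac:(lra) m.
have := step_nonincreasing z p_ge.
have := dist_triangle z (iterate T p z) (T z).
have := dist_triangle (iterate T p z) (iterate T p.+1 z) (T z).
have : dist (iterate T p.+1 z) (T z) <= dist (iterate T p z) z by apply: T_ne.
by rewrite (dist_sym z (iterate T p z)); lra.
Qed.

End NonexpansiveOrbits.

Section AveragedRecurrence.

Variables (n : nat) (alpha : R) (T : vec n -> vec n).
Hypotheses (alpha_range : 0 < alpha < 1) (T_avg : averaged alpha T).

Let T_ne : nonexpansive T.
Proof. by apply: averaged_nonexpansive T_avg; lra. Qed.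

(* By rigidity, all steps along the orbit of a recurrent point are equal, so the
   orbit lies on a line: z - T^m z = m (z - T z). *)
Lemma recurrent_orbit_line z : recurrent T z -> forall m,
  vsub z (iterate T m z) = vscale (INR m) (vsub z (T z)).
Proof.
move=> rec.
have step_eq m : vsub (iterate T m z) (iterate T m.+1 z) = vsub z (T z).
  elim: m => [|m IH] //; rewrite -IH !iterate_S.
  apply: (averaged_rigid (proj2 alpha_range) T_avg).
  by rewrite -!iterate_S !(recurrent_step_const T_ne rec).
elim=> [|m IH]; apply: functional_extensionality => i.
  by rewrite /vsub /vscale /=; ring.
have := f_equal (fun v => v i) IH; have := f_equal (fun v => v i) (step_eq m).
rewrite /vsub /vscale S_INR; lra.
Qed.

(* A recurrent point of an averaged map is fixed: it returns arbitrarily close to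
   itself, while |z - T^p z| = p |z - T z| >= |z - T z| for p >= 1. *)
Lemma recurrent_fixed z : recurrent T z -> T z = z.
Proof.
move=> rec.
suff /vnorm_le0 v0 : vnorm (vsub z (T z)) <= 0.
  apply: functional_extensionality => i.
  by have := f_equal (fun v => v i) v0; rewrite /vsub; lra.
apply: Rle_plus_epsilon => e e_pos.
have [p [p_ge1 p_close]] := rec e e_pos 1%N.
rewrite dist_sym recurrent_orbit_line // vnorm_scale in p_close; last exact: pos_INR.
have : 1 <= INR p by apply: (le_INR 1); apply/leP.
have := vnorm_ge0 (vsub z (T z)); nra.
Qed.

Lemma orbit_cluster_point_fixed x z :
  cluster_point (fun k => iterate T k x) z -> T z = z.
Proof. by move=> /(cluster_point_recurrent T_ne)/recurrent_fixed. Qed.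

End AveragedRecurrence.

Lemma real_subseq (u : nat -> R) M : (forall k, Rabs (u k) <= M) ->
  exists (g : nat -> nat) (l : R), forall j, (j <= g j)%N /\ Rabs (u (g j) - l) < / INR j.+1.
Proof.
move=> u_bd.
have u_in k : -M <= u k <= M.
  by have := u_bd k; have := Rle_abs (- u k); rewrite Rabs_Ropp; have := Rle_abs (u k); lra.
have [l l_adh] := Bolzano_Weierstrass u _ (compact_P3 (-M) M) u_in.
have near j : exists k, (j <= k)%N /\ Rabs (u k - l) < / INR j.+1.
  have tol_pos : 0 < / INR j.+1 by apply/Rinv_0_lt_compat/lt_0_INR/leP.
  have [k [j_le_k k_near]] := l_adh _ j (ex_intro _ (mkposreal _ tol_pos) (fun y y_in => y_in)).
  by exists k; split; first apply/leP.
have [g g_spec] := choice _ near.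
by exists g, l.
Qed.

(* Bolzano-Weierstrass in R^n, extracting one coordinate at a time: after m
   extractions the first m coordinates of y (g j) are within 1/(j+1) of z. *)
Lemma vec_subseq n (y : nat -> vec n) M : (forall k, vnorm (y k) <= M) -> forall m,
  exists (g : nat -> nat) (z : vec n), forall j, (j <= g j)%N /\
    forall i : 'I_n, (i < m)%N -> Rabs (y (g j) i - z i) < / INR j.+1.
Proof.
move=> y_bd; elim=> [|m [g [z gz]]].
  by exists id, (fun _ => 0) => j; split.
case: (ltnP m n) => [m_lt_n | n_le_m]; last first.
  exists g, z => j; have [gj_ge gj_near] := gz j; split=> // i _.
  exact/gj_near/(leq_trans (ltn_ord i) n_le_m).
pose i0 := Ordinal m_lt_n.
have [f [l fl]] := real_subseq (fun k => Rle_trans _ _ _ (coord_le_vnorm (y (g k)) i0) (y_bd _)).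
exists (fun j => g (f j)), (fun i => if nat_of_ord i == m then l else z i) => j.
have [fj_ge fj_near] := fl j; have [gfj_ge gfj_near] := gz (f j).
split; first exact: leq_trans fj_ge gfj_ge.
have tol_le : / INR (f j).+1 <= / INR j.+1.
  by apply/Rinv_le_contravar/le_INR/leP; [apply/lt_0_INR/leP|].
move=> i; rewrite ltnS leq_eqVlt; case: eqP => [i_m _ | _ i_lt_m].
  by have -> : i = i0 by apply: val_inj.
by have := gfj_near i i_lt_m; lra.
Qed.

Lemma tolerance_small c e N : 0 < e -> exists j, (N <= j)%N /\ c * / INR j.+1 < e.
Proof.
move=> e_pos; have [J J_large] := INR_unbounded (c / e).
exists (maxn N J); split; first exact: leq_maxl.
have : INR J <= INR (maxn N J) by apply/le_INR/leP/leq_maxr.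
have := pos_INR (maxn N J); rewrite S_INR => max_ge0 J_le_max.
have c_lt : c < e * (INR (maxn N J) + 1).
  have -> : c = c / e * e by field; lra.
  nra.
have : c * / (INR (maxn N J) + 1) * (INR (maxn N J) + 1) = c by field; lra.
nra.
Qed.

Lemma bounded_cluster_point n (y : nat -> vec n) M :
  (forall k, vnorm (y k) <= M) -> exists z, cluster_point y z.
Proof.
move=> y_bd; have [g [z gz]] := vec_subseq y_bd n.
exists z => e e_pos N.
have [j [N_le_j j_small]] := tolerance_small (sqrt (INR n)) N e_pos.
have [gj_ge gj_near] := gz j.
exists (g j); split; first exact: leq_trans N_le_j gj_ge.
apply: Rle_lt_trans j_small; apply: vnorm_le_coord => [|i].
  by apply/Rlt_le/Rinv_0_lt_compat/lt_0_INR/leP.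
exact/Rlt_le/gj_near.
Qed.

Lemma frequently_bounded_cluster_point n (y : nat -> vec n) M :
  (forall N, exists k, (N <= k)%N /\ vnorm (y k) <= M) -> exists z, cluster_point y z.
Proof.
move=> y_freq; have [g g_spec] := choice _ y_freq.
have [z z_cl] := bounded_cluster_point (y := fun N => y (g N)) (fun N => proj2 (g_spec N)).
exists z => e e_pos N; have [k [N_le_k k_close]] := z_cl e e_pos N.
by exists (g k); split; first exact: leq_trans N_le_k (proj1 (g_spec k)).
Qed.

Lemma not_cv_infty (u : nat -> R) : ~ cv_infty u ->
  exists M, forall N, exists k, (N <= k)%N /\ u k <= M.
Proof.
move=> /not_all_ex_not [M not_above]; exists M => N.
have [k k_bad] := not_all_ex_not _ _ (not_ex_all_not _ _ not_above N).
have [N_le_k not_gt] := imply_to_and _ _ k_bad.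
by exists k; split; [apply/leP | apply: Rnot_lt_le].
Qed.

Lemma iterate_fixed n (T : vec n -> vec n) p k : T p = p -> iterate T k p = p.
Proof. by move=> Tp; elim: k => [|k IH] //; rewrite iterate_S IH. Qed.

Theorem mainTheorem4 (n : nat) (alpha : R) (T : vec n -> vec n)
  (Halpha : (0 < alpha < 1)%R) (HT : averaged alpha T) :
  (~ exists x : vec n, T x = x) <->
  (forall x : vec n, cv_infty (fun k : nat => vnorm (iterate T k x))).
Proof.
split=> [no_fixed x | diverge [p Tp]].
- apply: NNPP => /not_cv_infty [M returns].
  have [z z_cl] := frequently_bounded_cluster_point (y := fun k => iterate T k x) returns.
  by apply: no_fixed; exists z; exact: (orbit_cluster_point_fixed Halpha HT z_cl).
- have [N above] := diverge p (vnorm p).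
  by have := above N (le_n N); rewrite iterate_fixed //; lra.
Qed.
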